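(* Let $F:\mathcal{G}_{\Sigma,\Delta,\pi}\to\mathcal{G}_{\Sigma,\Delta,\pi}$ be a causal graph dynamics with local rule $f:\mathcal{D}^r_{\Sigma,\Delta,\pi}\to\mathcal{G}_{\Sigma,\Delta,\pi}$ of radius $r$ (i.e. $F(G)=\bigcup_{v\in V(G)} f(G^r_v)$ for all $G$). If $f$ is monotonic (from the subdisk order to the subgraph order), then $F$ is the pointwise left Kan extension of $f$ along the pointer dropping function $i:\mathcal{D}^r_{\Sigma,\Delta,\pi}\to\mathcal{G}_{\Sigma,\Delta,\pi}$, $i((H,c))=H$; that is, for every graph $G$, the set $\{f(D)\mid D\in\mathcal{D}^r_{\Sigma,\Delta,\pi},\ i(D)\subseteq G\}$ has a supremum in $(\mathcal{G}_{\Sigma,\Delta,\pi},\subseteq)$ and this supremum equals $F(G)$.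
   Context: Fix an uncountably infinite set $\mathcal{V}$ of vertex names, sets $\Sigma,\Delta$ and a finite set $\pi$ of ports. A graph $G$ (with states in $\Sigma,\Delta$ and ports in $\pi$) consists of a countable set $V(G)\subset\mathcal{V}$; a set $E(G)$ of two-element subsets of $V(G)\times\pi$ that are pairwise disjoint (each $u\!:\!i:=(u,i)$ lies in at most one edge); partial functions $\sigma(G):V(G)\rightharpoonup\Sigma$ and $\delta(G):E(G)\rightharpoonup\Delta$. $\mathcal{G}_{\Sigma,\Delta,\pi}$ is the set of such graphs; a pointed graph is $(G,v)$ with $v\in V(G)$. Subgraph order: $G\subseteq H$ iff $V(G)\subseteq V(H)$, $E(G)\subseteq E(H)$, $\sigma(G)\subseteq\sigma(H)$, $\delta(G)\subseteq\delta(H)$ (partial functions viewed as sets of input–output pairs); on pointed graphs $(G,v)\subseteq(H,u)$ iff $G\subseteq H$ and $v=u$ (restricted to disks: subdisk order). Two graphs are consistent if $E(G)\cup E(H)$ consists of pairwise disjoint two-element sets and $\sigma(G),\sigma(H)$ agree where both are defined, and likewise $\delta(G),\delta(H)$; then $G\cup H$ is the componentwise union. The empty graph is $\varnothing$. Distance $d_G(u,v)$ is the length of a shortest path, a path being a sequence of vertices with consecutive vertices joined by an edge (through some ports); $B_G(c,r)=\{u\in V(G)\mid d_G(c,u)\le r\}$. The disk of radius $r$ and center $c\in V(G)$ is the pointed graph $G^r_c=(H,c)$ with $V(H)=B_G(c,r+1)$, $E(H)=\{\{u\!:\!i,v\!:\!j\}\in E(G)\mid \{u,v\}\cap B_G(c,r)\neq\emptyset\}$,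 $\sigma(H)=\sigma(G)$ restricted to $B_G(c,r)$, $\delta(H)=\delta(G)$ restricted to $E(H)$. $\mathcal{D}^r_{\Sigma,\Delta,\pi}=\{G^r_c\mid G\in\mathcal{G}_{\Sigma,\Delta,\pi},c\in V(G)\}$. A renaming is a bijection $R:\mathcal{V}\to\mathcal{V}$ acting on edges by $R(\{u\!:\!i,v\!:\!j\})=\{R(u)\!:\!i,R(v)\!:\!j\}$, on graphs by $V(R(G))=R(V(G))$, $E(R(G))=R(E(G))$, $\sigma(R(G))=\sigma(G)\circ R^{-1}$, $\delta(R(G))=\delta(G)\circ R^{-1}$, and on pointed graphs by $R(G,v)=(R(G),R(v))$. A local rule of radius $r$ is a function $f:\mathcal{D}^r_{\Sigma,\Delta,\pi}\to\mathcal{G}_{\Sigma,\Delta,\pi}$ such that (1) for every renaming $R$ there is a renaming $R'$ with $f\circ R=R'\circ f$; (2) for every family $(H_k,v_k)_k$ of radius-$r$ disks with $\bigcap_k H_k=\varnothing$, $\bigcap_k f((H_k,v_k))=\varnothing$ (intersection componentwise); (3) there is $b$ with $|V(f(D))|\le b$ for all $D$; (4) for every $G$ and $u,v\in V(G)$, $f(G^r_u)$ and $f(G^r_v)$ are consistent. A causal graph dynamics (CGD) is a map $F:\mathcal{G}_{\Sigma,\Delta,\pi}\to\mathcal{G}_{\Sigma,\Delta,\pi}$ for which there exist $r$ and a local rule $f$ of radius $r$ with $F(G)=\bigcup_{v\in V(G)}f(G^r_v)$ for all $G$. *)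

From Stdlib Require Import List Arith.
Set Implicit Arguments.

Section CGD.
Variables (Vn Sigma Delta Port : Type).

Definition pend := (Vn * Port)%type.

(* Sets are predicates.
   - gV : the vertex set V(G).
   - gE a b : the two-element set {a, b} belongs to E(G)
              (E(G) is represented as a symmetric relation on port ends).
   - gS v s : sigma(G) maps v to s (partial function as a functional relation).
   - gD a b d : delta(G) maps the edge {a, b} to d. *)
Record graph := mkGraph {
  gV : Vn -> Prop;
  gE : pend -> pend -> Prop;
  gS : Vn -> Sigma -> Prop;
  gD : pend -> pend -> Delta -> Prop }.

Definition countable_set (A : Vn -> Prop) : Prop :=
  exists g : nat -> option Vn, forall v, A v -> exists n, g n = Some v.

Definition wf (G : graph) : Prop :=
  countable_set (gV G) /\
  (forall a b, gE G a b -> gE G b a) /\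
  (forall a b, gE G a b -> a <> b) /\
  (forall a b, gE G a b -> gV G (fst a)) /\
  (forall a b c, gE G a b -> gE G a c -> b = c) /\
  (forall v s, gS G v s -> gV G v) /\
  (forall v s t, gS G v s -> gS G v t -> s = t) /\
  (forall a b d, gD G a b d -> gE G a b) /\
  (forall a b d, gD G a b d -> gD G b a d) /\
  (forall a b d d', gD G a b d -> gD G a b d' -> d = d').

Definition empty_graph : graph :=
  mkGraph (fun _ => False) (fun _ _ => False) (fun _ _ => False) (fun _ _ _ => False).

Definition is_empty (G : graph) : Prop :=
  (forall v, ~ gV G v) /\ (forall a b, ~ gE G a b) /\
  (forall v s, ~ gS G v s) /\ (forall a b d, ~ gD G a b d).

Definition subgraph (G H : graph) : Prop :=
  (forall v, gV G v -> gV H v) /\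
  (forall a b, gE G a b -> gE H a b) /\
  (forall v s, gS G v s -> gS H v s) /\
  (forall a b d, gD G a b d -> gD H a b d).

Definition pgraph := (graph * Vn)%type.

Definition psubgraph (D1 D2 : pgraph) : Prop :=
  subgraph (fst D1) (fst D2) /\ snd D1 = snd D2.

Definition consistent (G H : graph) : Prop :=
  (forall a b c, (gE G a b \/ gE H a b) -> (gE G a c \/ gE H a c) -> b = c) /\
  (forall v s t, gS G v s -> gS H v t -> s = t) /\
  (forall a b d d', gD G a b d -> gD H a b d' -> d = d').

Definition gunion (I : Vn -> Prop) (g : Vn -> graph) : graph :=
  mkGraph (fun x => exists v, I v /\ gV (g v) x)
          (fun a b => exists v, I v /\ gE (g v) a b)
          (fun x s => exists v, I v /\ gS (g v) x s)
          (fun a b d => exists v, I v /\ gD (g v) a b d).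

Definition ginter (P : pgraph -> Prop) (h : pgraph -> graph) : graph :=
  mkGraph (fun x => forall D, P D -> gV (h D) x)
          (fun a b => forall D, P D -> gE (h D) a b)
          (fun x s => forall D, P D -> gS (h D) x s)
          (fun a b d => forall D, P D -> gD (h D) a b d).

Definition adjacent (G : graph) (u v : Vn) : Prop :=
  exists i j, gE G (u, i) (v, j).

Inductive walk (G : graph) : nat -> Vn -> Vn -> Prop :=
| walk0 : forall u, gV G u -> walk G 0 u u
| walkS : forall n u v w, walk G n u v -> adjacent G v w -> walk G (S n) u w.

Definition ball (G : graph) (c : Vn) (r : nat) (u : Vn) : Prop :=
  gV G u /\ exists k, k <= r /\ walk G k c u.

Definition disk (G : graph) (r : nat) (c : Vn) : pgraph :=
  let EH := fun a b => gE G a b /\ (ball G c r (fst a) \/ ball G c r (fst b)) in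
  (mkGraph (ball G c (S r))
           EH
           (fun x s => gS G x s /\ ball G c r x)
           (fun a b d => gD G a b d /\ EH a b), c).

Definition is_disk (r : nat) (D : pgraph) : Prop :=
  exists G c, wf G /\ gV G c /\ D = disk G r c.

Record renaming := mkRen {
  ren : Vn -> Vn;
  ren_inv : Vn -> Vn;
  ren_K : forall x, ren_inv (ren x) = x;
  ren_invK : forall x, ren (ren_inv x) = x }.

Definition ren_graph (R : renaming) (G : graph) : graph :=
  mkGraph (fun x => gV G (ren_inv R x))
          (fun a b => gE G (ren_inv R (fst a), snd a) (ren_inv R (fst b), snd b))
          (fun x s => gS G (ren_inv R x) s)
          (fun a b d => gD G (ren_inv R (fst a), snd a) (ren_inv R (fst b), snd b) d).

Definition ren_pgraph (R : renaming) (D : pgraph) : pgraph :=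
  (ren_graph R (fst D), ren R (snd D)).

Definition finite_card_le (A : Vn -> Prop) (b : nat) : Prop :=
  exists l : list Vn, length l <= b /\ forall v, A v -> In v l.

Definition local_rule (r : nat) (f : pgraph -> graph) : Prop :=
  (forall D, is_disk r D -> wf (f D)) /\
  (forall R : renaming, exists R' : renaming,
      forall D, is_disk r D -> f (ren_pgraph R D) = ren_graph R' (f D)) /\
  (forall P : pgraph -> Prop, (forall D, P D -> is_disk r D) ->
      is_empty (ginter P fst) -> is_empty (ginter P f)) /\
  (exists b, forall D, is_disk r D -> finite_card_le (gV (f D)) b) /\
  (forall G u v, wf G -> gV G u -> gV G v ->
      consistent (f (disk G r u)) (f (disk G r v))).

Definition monotonic_on_disks (r : nat) (f : pgraph -> graph) : Prop :=
  forall D1 D2, is_disk r D1 -> is_disk r D2 -> psubgraph D1 D2 ->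
    subgraph (f D1) (f D2).

Definition is_sup (A : graph -> Prop) (S : graph) : Prop :=
  wf S /\ (forall H, A H -> subgraph H S) /\
  (forall U, wf U -> (forall H, A H -> subgraph H U) -> subgraph S U).

End CGD.

Arguments empty_graph {Vn Sigma Delta Port}.

(* F(G) is the union of the f(G^r_v), and each G^r_v is a disk contained in G,
   so F(G) is below every upper bound of the family.  Conversely, if a disk
   D = H^r_c is contained in G then D is a subdisk of G^r_c: D contains every
   edge of H incident to B_H(c, r), so every path of H of length at most r+1
   from c is a path of G, and B_H(c, k) is included in B_G(c, k) for k <= r+1.
   Monotonicity of f then gives f(D) below f(G^r_c), which is part of F(G). *)

From Stdlib Require Import List Lia.

Set Implicit Arguments.

Section Subgraphs.
Variables (Vn Sigma Delta Port : Type).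
Notation graph := (graph Vn Sigma Delta Port).

Lemma subgraph_trans (G H K : graph) :
  subgraph G H -> subgraph H K -> subgraph G K.
Proof.
  intros (GV & GE & GS & GD) (HV & HE & HS & HD).
  split; [|split; [|split]]; auto.
Qed.

Lemma subgraph_gunion (I : Vn -> Prop) (g : Vn -> graph) v :
  I v -> subgraph (g v) (gunion I g).
Proof.
  intros Iv; split; [|split; [|split]]; simpl; intros; exists v; auto.
Qed.

Lemma gunion_least (I : Vn -> Prop) (g : Vn -> graph) (U : graph) :
  (forall v, I v -> subgraph (g v) U) -> subgraph (gunion I g) U.
Proof.
  intros Hg; split; [|split; [|split]]; simpl;
    intros * (v & Iv & Hv); destruct (Hg v Iv) as (UV & UE & US & UD); auto.
Qed.

End Subgraphs.

Section Disks.
Variables (Vn Sigma Delta Port : Type).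
Notation graph := (graph Vn Sigma Delta Port).

Lemma walk_last_vertex (H : graph) n c u : wf H -> walk H n c u -> gV H u.
Proof.
  intros (_ & Esym & _ & Evert & _) W.
  induction W as [u Hu | n u v w W IH [i [j E]]]; auto.
  apply (Evert (w, j) (v, i)), Esym, E.
Qed.

Lemma disk_subgraph (G : graph) r c : subgraph (fst (disk G r c)) G.
Proof.
  split; [|split; [|split]]; simpl.
  - intros v [Hv _]; exact Hv.
  - intros a b [E _]; exact E.
  - intros v s [S _]; exact S.
  - intros a b d [D _]; exact D.
Qed.

Section DiskInside.
Variables (H G : graph) (r : nat) (c : Vn).
Hypothesis H_wf : wf H.
Hypothesis disk_in_G : subgraph (fst (disk H r c)) G.

Lemma walk_from_center_in_disk n u :
  n <= S r -> walk H n c u -> walk G n c u.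
Proof.
  destruct disk_in_G as (SV & SE & _).
  intros Hn W; remember c as c0 eqn:Ec; revert Hn.
  induction W as [u Hu | n u v w W IH [i [j E]]]; intros Hn; subst.
  - constructor; apply SV; split; [exact Hu | exists 0; split; [lia | now constructor]].
  - econstructor; [apply IH; auto; lia |].
    exists i, j; apply SE; split; [exact E |].
    left; split; [eapply walk_last_vertex; eauto | exists n; split; [lia | exact W]].
Qed.

Lemma ball_in_disk k x : k <= S r -> ball H c k x -> ball G c k x.
Proof.
  intros Hk (Hx & m & Hm & W); split.
  - apply (proj1 disk_in_G); split; [exact Hx | exists m; split; [lia | exact W]].
  - exists m; split; [exact Hm | apply walk_from_center_in_disk; [lia | exact W]].
Qed.

Lemma disk_subgraph_disk : subgraph (fst (disk H r c)) (fst (disk G r c)).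
Proof.
  destruct disk_in_G as (SV & SE & SS & SD).
  assert (Br : forall x, ball H c r x -> ball G c r x)
    by (intros; apply ball_in_disk; auto).
  split; [|split; [|split]]; simpl.
  - intros v Hv; apply ball_in_disk; auto.
  - intros a b [E B]; split; [apply SE; now split | destruct B; auto].
  - intros v s [S B]; split; [apply SS; now split | auto].
  - intros a b d [D [E B]]; split; [apply SD; now split |].
    split; [apply SE; now split | destruct B; auto].
Qed.

End DiskInside.

Lemma disk_center_vertex (H G : graph) r c :
  gV H c -> subgraph (fst (disk H r c)) G -> gV G c.
Proof.
  intros Hc (SV & _).
  apply SV; split; [exact Hc | exists 0; split; [lia | now constructor]].
Qed.

End Disks.

Theorem proposition2p8
  (Vn Sigma Delta Port : Type)
  (Vn_uncountable : ~ exists g : nat -> Vn, forall v, exists n, g n = v)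
  (Port_finite : exists l : list Port, forall p, In p l)
  (F : graph Vn Sigma Delta Port -> graph Vn Sigma Delta Port)
  (r : nat) (f : pgraph Vn Sigma Delta Port -> graph Vn Sigma Delta Port)
  (HF_wf : forall G, wf G -> wf (F G))
  (Hf : local_rule r f)
  (HF : forall G, wf G -> F G = gunion (gV G) (fun v => f (disk G r v)))
  (Hmono : monotonic_on_disks r f) :
  forall G, wf G ->
    is_sup (fun H => exists D, is_disk r D /\ subgraph (fst D) G /\ H = f D) (F G).
Proof.
  intros G HG; split; [exact (HF_wf G HG) | rewrite (HF G HG); split].
  - intros K (D & (H & c & Hw & Hc & ->) & Hs & ->).
    assert (Gc : gV G c) by exact (disk_center_vertex Hc Hs).
    apply subgraph_trans with (f (disk G r c)).
    + apply Hmono; [exists H, c; auto | exists G, c; auto |].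
      split; [now apply disk_subgraph_disk | reflexivity].
    + exact (subgraph_gunion (gV G) (fun v => f (disk G r v)) c Gc).
  - intros U _ Hub; apply gunion_least; intros v Hv.
    apply Hub; exists (disk G r v); split; [exists G, v; auto |].
    split; [apply disk_subgraph | reflexivity].
Qed.
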